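(* There exist maps $k\mapsto\Lambda_k\in\mathbb{R}^{p\times p}$, with $\Lambda_k$ a discrete-time interconnection for each $k\in\mathbb{N}$, and $Q:\mathbb{N}\to\overline{\mathcal Q}_n$ such that the system $\mathbf x^+=(I_{np}+(\Lambda_k-I_p)\otimes Q_k)\mathbf x$ has an unbounded solution.
   Context: $\otimes$ Kronecker product; $\overline{\mathcal Q}_n$ the set of symmetric positive semidefinite $n\times n$ matrices with induced 2-norm at most $1$. A discrete-time interconnection is $\Lambda=[\lambda_{ij}]$ with $\lambda_{ij}\ge0$ and $\sum_j\lambda_{ij}=1$ for all $i$. *)

From mathcomp Require Import all_boot all_order all_algebra.
From mathcomp Require Export mxtens.
From mathcomp Require Export Rstruct.
From Stdlib Require Import Reals.
Set Implicit Arguments. Unset Strict Implicit. Unset Printing Implicit Defensive.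
Import Order.TTheory GRing.Theory Num.Theory.
Local Open Scope ring_scope.

Definition interconnection (p : nat) (L : 'M[R]_p) : Prop :=
  (forall i j, 0 <= L i j) /\ (forall i, \sum_(j < p) L i j = 1).

Definition norm2 (n : nat) (v : 'cV[R]_n) : R :=
  Num.sqrt (\sum_(i < n) v i 0 ^+ 2).

Definition Qbar (n : nat) (Q : 'M[R]_n) : Prop :=
  Q^T = Q /\
  (forall v : 'cV[R]_n, 0 <= (v^T *m Q *m v) 0 0) /\
  (forall v : 'cV[R]_n, norm2 (Q *m v) <= norm2 v).

Definition sysmx (p n : nat) (L : 'M[R]_p) (Q : 'M[R]_n) : 'M[R]_(p * n) :=
  1%:M + (L - 1%:M) *t Q.

Definition is_solution (p n : nat) (L : nat -> 'M[R]_p) (Q : nat -> 'M[R]_n)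
  (x : nat -> 'cV[R]_(p * n)) : Prop :=
  forall k, x k.+1 = sysmx (L k) (Q k) *m x k.

(* Unbounded sequence of vectors (all norms on R^{np} are equivalent). *)
Definition unbounded (m : nat) (x : nat -> 'cV[R]_m) : Prop :=
  forall B : R, exists k, B < norm2 (x k).

From mathcomp Require Import all_boot all_order all_algebra.
From mathcomp Require Import mxtens Rstruct.
From Stdlib Require Import Reals.
From mathcomp Require Import ring lra.
Set Implicit Arguments. Unset Strict Implicit. Unset Printing Implicit Defensive.
Import Order.TTheory GRing.Theory Num.Theory.
Local Open Scope ring_scope.

(* Three agents move in the plane; stacking their positions as the rows of a
   3 x 2 matrix X, the system reads X+ = X + (L_k - I) X Q_k^T.  When row i of
   L_k is e_j, agent i moves by the orthogonal projection of x_j - x_i onto a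
   line.  From (0, y), (1, y + 1), (2, y), four such moves (vertical,
   horizontal, anti-diagonal, vertical) reach (0, y + 1), (1, y + 2), (2, y + 1):
   the anti-diagonal projection turns the horizontal displacement (-2, 0) into
   (-1, 1), lifting the middle agent, and the others then follow it vertically.
   Each round shifts the configuration up by one, so the solution is unbounded. *)

Section Selection.
Variable K : pzRingType.

Definition select_mx p (f : 'I_p -> 'I_p) : 'M[K]_p := \matrix_(i, j) (f i == j)%:R.

Lemma sum_select_row p (f : 'I_p -> 'I_p) (F : 'I_p -> K) i :
  \sum_j (f i == j)%:R * F j = F (f i).
Proof.
rewrite (bigD1 (f i)) //= eqxx mul1r big1 ?addr0 // => j /negbTE.
by rewrite eq_sym => ->; rewrite mul0r.
Qed.

Lemma row_select_mul p n (f : 'I_p -> 'I_p) (X : 'M[K]_(p, n)) i :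
  row i (select_mx f *m X) = row (f i) X.
Proof.
apply/rowP => k; rewrite !mxE.
under eq_bigr do rewrite mxE.
exact: sum_select_row (fun j => X j k) i.
Qed.

Definition follow_mx p (i0 j0 : 'I_p) : 'M[K]_p :=
  select_mx (fun i => if i == i0 then j0 else i).

Definition update_mx p n (L : 'M[K]_p) (Q : 'M[K]_n) (X : 'M[K]_(p, n)) :=
  X + (L - 1%:M) *m X *m Q^T.

Lemma row_update_follow p n (i0 j0 : 'I_p) (Q : 'M[K]_n) X :
  row i0 (update_mx (follow_mx i0 j0) Q X) = row i0 X + (row j0 X - row i0 X) *m Q^T.
Proof.
by rewrite /update_mx (mulmxBl (follow_mx i0 j0)) mul1mx linearD /= row_mul linearB /=
  row_select_mul eqxx.
Qed.

Lemma row_update_follow_id p n (i0 j0 : 'I_p) (Q : 'M[K]_n) X i :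
  i != i0 -> row i (update_mx (follow_mx i0 j0) Q X) = row i X.
Proof.
move=> /negbTE ne_i.
by rewrite /update_mx mulmxBl mul1mx linearD /= row_mul linearB /= row_select_mul ne_i
  subrr mul0mx addr0.
Qed.
End Selection.

Arguments select_mx {K p}.
Arguments follow_mx {K p}.

Lemma interconnection_select p (f : 'I_p -> 'I_p) : interconnection (select_mx f).
Proof.
split=> [i j | i]; first by rewrite mxE ler0n.
under eq_bigr do rewrite mxE -[_%:R]mulr1.
exact: sum_select_row (fun _ => 1) i.
Qed.

Section Vectorization.
Variable K : comPzRingType.

Definition vecmx m n (X : 'M[K]_(m, n)) : 'cV[K]_(m * n) :=
  \col_ix X (mxtens_unindex ix).1 (mxtens_unindex ix).2.

Lemma vecmxE m n (X : 'M[K]_(m, n)) i k : vecmx X (mxtens_index (i, k)) 0 = X i k.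
Proof. by rewrite mxE mxtens_indexK. Qed.

Lemma vecmxD m n (X Y : 'M[K]_(m, n)) : vecmx (X + Y) = vecmx X + vecmx Y.
Proof. by apply/matrixP => ix j; rewrite !mxE. Qed.

Lemma big_mxtens m n (F : 'I_(m * n) -> K) :
  \sum_ix F ix = \sum_(i < m) \sum_(k < n) F (mxtens_index (i, k)).
Proof.
rewrite pair_big (reindex (@mxtens_index m n)) /=; first by apply: eq_bigr => -[].
by exists (@mxtens_unindex m n) => ix _; rewrite (mxtens_indexK, mxtens_unindexK).
Qed.

Lemma tensmx_vecmx m n p q (A : 'M[K]_(m, p)) (B : 'M[K]_(n, q)) (X : 'M[K]_(p, q)) :
  (A *t B) *m vecmx X = vecmx (A *m X *m B^T).
Proof.
apply/matrixP => ix j; rewrite [j]ord1; case: (mxtens_indexP ix) => i k.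
rewrite vecmxE !mxE big_mxtens.
under eq_bigr do under eq_bigr do rewrite tensmxE vecmxE.
under [RHS]eq_bigr do rewrite !mxE big_distrl /=.
rewrite [RHS]exchange_big; apply: eq_bigr => l _; apply: eq_bigr => l' _ /=.
by rewrite mulrAC.
Qed.
End Vectorization.

Lemma sysmx_vecmx p n (L : 'M[R]_p) (Q : 'M[R]_n) (X : 'M[R]_(p, n)) :
  sysmx L Q *m vecmx X = vecmx (update_mx L Q X).
Proof. by rewrite /sysmx mulmxDl mul1mx tensmx_vecmx vecmxD. Qed.

Lemma norm2_ge_coord n (v : 'cV[R]_n) i : `|v i 0| <= norm2 v.
Proof.
rewrite -sqrtr_sqr /norm2 ler_wsqrtr // (bigD1 i) //= lerDl.
by apply: sumr_ge0 => j _; exact: sqr_ge0.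
Qed.

Lemma mulmx_tr_self n (w : 'cV[R]_n) : (w^T *m w) 0 0 = \sum_i w i 0 ^+ 2.
Proof. by rewrite mxE; apply: eq_bigr => i _; rewrite mxE expr2. Qed.

Lemma Qbar_proj n (P : 'M[R]_n) : P^T = P -> P *m P = P -> Qbar P.
Proof.
move=> symP idemP.
have quadP (v : 'cV[R]_n) : v^T *m P *m v = (P *m v)^T *m (P *m v).
  by rewrite trmx_mul symP mulmxA -(mulmxA _ P P) idemP.
have pythagoras (v : 'cV[R]_n) :
    v^T *m v = (P *m v)^T *m (P *m v) + (v - P *m v)^T *m (v - P *m v).
  pose w : 'cV[R]_n := v - P *m v.
  have cross : (P *m v)^T *m w = 0 by rewrite mulmxBr -quadP trmx_mul symP subrr.
  have cross' : w^T *m (P *m v) = 0.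
    by rewrite -[LHS]trmxK trmx_mul trmxK cross trmx0.
  have {1 2}-> : v = P *m v + w by rewrite addrC subrK.
  by rewrite mulmxDr [(_ + w)^T]linearD /= !mulmxDl cross cross' addr0 add0r.
split; [done | split=> v].
- by rewrite quadP mulmx_tr_self sumr_ge0 // => i _; exact: sqr_ge0.
- rewrite /norm2; apply: ler_wsqrtr.
  rewrite -!mulmx_tr_self (pythagoras v) [X in _ <= X]mxE lerDl mulmx_tr_self.
  by rewrite sumr_ge0 // => i _; exact: sqr_ge0.
Qed.

Section LineProjection.
Variables (F : fieldType) (n : nat) (u : 'rV[F]_n).

Definition line_proj : 'M[F]_n := ((u *m u^T) 0 0)^-1 *: (u^T *m u).

Lemma trmx_line_proj : line_proj^T = line_proj.
Proof. by rewrite /line_proj linearZ /= trmx_mul trmxK. Qed.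

Lemma mul_line_proj m (D : 'M[F]_(m, n)) :
  D *m line_proj = ((u *m u^T) 0 0)^-1 *: (D *m u^T *m u).
Proof. by rewrite /line_proj linearZ /= mulmxA. Qed.

Lemma row_mul_line_proj (d : 'rV[F]_n) :
  d *m line_proj = ((d *m u^T) 0 0 / (u *m u^T) 0 0) *: u.
Proof.
by rewrite mul_line_proj {1}[d *m u^T]mx11_scalar mul_scalar_mx scalerA mulrC.
Qed.

Lemma line_proj_idem : (u *m u^T) 0 0 != 0 -> line_proj *m line_proj = line_proj.
Proof.
move=> nz_u; rewrite mul_line_proj {1}/line_proj -scalemxAl -(mulmxA u^T u u^T).
set s := (u *m u^T) 0 0; rewrite [u *m u^T]mx11_scalar -/s mul_mx_scalar.
by rewrite -!scalemxAl !scalerA mulVf // mulr1.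
Qed.
End LineProjection.

Lemma Qbar_line_proj n (u : 'rV[R]_n) : (u *m u^T) 0 0 != 0 -> Qbar (line_proj u).
Proof. by move=> nz_u; apply: Qbar_proj; [exact: trmx_line_proj | exact: line_proj_idem]. Qed.

Definition pt (a b : R) : 'rV[R]_2 := \row_k [:: a; b]`_k.
(* Stdlib binds [R_scope] to arguments of type [R]; we want ring numerals. *)
Arguments pt (a b)%_ring_scope.

Lemma ptD a b c d : pt a b + pt c d = pt (a + c) (b + d).
Proof. by apply/rowP => -[[|[|]]] //= ?; rewrite !mxE. Qed.

Lemma ptB a b c d : pt a b - pt c d = pt (a - c) (b - d).
Proof. by apply/rowP => -[[|[|]]] //= ?; rewrite !mxE. Qed.

Lemma ptZ k a b : k *: pt a b = pt (k * a) (k * b).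
Proof. by apply/rowP => -[[|[|]]] //= ?; rewrite !mxE. Qed.

Lemma pt_dot a b c d : (pt a b *m (pt c d)^T) 0 0 = a * c + b * d.
Proof. by rewrite mxE !big_ord_recr big_ord0 /= !mxE add0r. Qed.

Lemma pt_mul_line_proj a b u v :
  pt a b *m (line_proj (pt u v))^T = ((a * u + b * v) / (u * u + v * v)) *: pt u v.
Proof. by rewrite trmx_line_proj row_mul_line_proj !pt_dot. Qed.

Definition config (r0 r1 r2 : 'rV[R]_2) : 'M[R]_(3, 2) :=
  \matrix_(i < 3) [:: r0; r1; r2]`_i.

Lemma config_row0 r0 r1 r2 : row 0 (config r0 r1 r2) = r0. Proof. exact: rowK. Qed.
Lemma config_row1 r0 r1 r2 : row 1 (config r0 r1 r2) = r1. Proof. exact: rowK. Qed.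
Lemma config_row2 r0 r1 r2 : row 2 (config r0 r1 r2) = r2. Proof. exact: rowK. Qed.
Definition config_rowE := (config_row0, config_row1, config_row2).

Lemma eq_config (X : 'M[R]_(3, 2)) r0 r1 r2 :
  row 0 X = r0 -> row 1 X = r1 -> row 2 X = r2 -> X = config r0 r1 r2.
Proof.
move=> X0 X1 X2; apply/row_matrixP => -[[|[|[|//]]] ?]; rewrite rowK /=.
- by rewrite -X0; congr row; apply: val_inj.
- by rewrite -X1; congr row; apply: val_inj.
- by rewrite -X2; congr row; apply: val_inj.
Qed.

Definition Px : 'M[R]_2 := line_proj (pt 1 0).
Definition Py : 'M[R]_2 := line_proj (pt 0 1).
Definition Pd : 'M[R]_2 := line_proj (pt 1 (-1)).

Lemma Qbar_Px : Qbar Px. Proof. by apply/Qbar_line_proj/lt0r_neq0; rewrite pt_dot; lra. Qed.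
Lemma Qbar_Py : Qbar Py. Proof. by apply/Qbar_line_proj/lt0r_neq0; rewrite pt_dot; lra. Qed.
Lemma Qbar_Pd : Qbar Pd. Proof. by apply/Qbar_line_proj/lt0r_neq0; rewrite pt_dot; lra. Qed.

Definition agents (y : R) := config (pt 0 y) (pt 1 (y + 1)) (pt 2 y).
Arguments agents y%_ring_scope.

Section Round.
Variable y : R.

Lemma round_move0 :
  update_mx (follow_mx 0 1) Py (agents y) = config (pt 0 (y + 1)) (pt 1 (y + 1)) (pt 2 y).
Proof.
rewrite /agents; apply: eq_config; last 2 first.
- by rewrite row_update_follow_id ?config_rowE.
- by rewrite row_update_follow_id ?config_rowE.
rewrite row_update_follow !config_rowE ptB pt_mul_line_proj ptZ ptD.
by congr pt; field.
Qed.

Lemma round_move1 :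
  update_mx (follow_mx 1 2) Px (config (pt 0 (y + 1)) (pt 1 (y + 1)) (pt 2 y)) =
  config (pt 0 (y + 1)) (pt 2 (y + 1)) (pt 2 y).
Proof.
apply: eq_config; first by rewrite row_update_follow_id ?config_rowE.
  rewrite row_update_follow !config_rowE ptB pt_mul_line_proj ptZ ptD.
  by congr pt; field.
by rewrite row_update_follow_id ?config_rowE.
Qed.

Lemma round_move2 :
  update_mx (follow_mx 1 0) Pd (config (pt 0 (y + 1)) (pt 2 (y + 1)) (pt 2 y)) =
  config (pt 0 (y + 1)) (pt 1 (y + 1 + 1)) (pt 2 y).
Proof.
apply: eq_config; first by rewrite row_update_follow_id ?config_rowE.
  rewrite row_update_follow !config_rowE ptB pt_mul_line_proj ptZ ptD.
  by congr pt; field.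
by rewrite row_update_follow_id ?config_rowE.
Qed.

Lemma round_move3 :
  update_mx (follow_mx 2 0) Py (config (pt 0 (y + 1)) (pt 1 (y + 1 + 1)) (pt 2 y)) =
  agents (y + 1).
Proof.
apply: eq_config; try by rewrite row_update_follow_id ?config_rowE.
rewrite row_update_follow !config_rowE ptB pt_mul_line_proj ptZ ptD.
by congr pt; field.
Qed.
End Round.

Definition schedule (k : nat) : 'M[R]_3 * 'M[R]_2 :=
  match modn k 4 with
  | 0 => (follow_mx 0 1, Py)
  | 1 => (follow_mx 1 2, Px)
  | 2 => (follow_mx 1 0, Pd)
  | _ => (follow_mx 2 0, Py)
  end.

Lemma schedule_period m j : schedule (j + m * 4) = schedule j.
Proof. by rewrite /schedule addnC modnMDl. Qed.

Fixpoint trajectory (k : nat) : 'M[R]_(3, 2) :=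
  if k is k'.+1 then update_mx (schedule k').1 (schedule k').2 (trajectory k')
  else agents 0.

Lemma trajectory_round m : trajectory (m * 4) = agents m%:R.
Proof.
elim: m => [// | m IH]; rewrite mulSn /=.
rewrite (schedule_period m 3) (schedule_period m 2) (schedule_period m 1).
by rewrite (schedule_period m 0) IH round_move0 round_move1 round_move2 round_move3 natr1.
Qed.

Lemma agents_height y : `|y| <= norm2 (vecmx (agents y)).
Proof.
have agents01 : agents y 0 1 = y.
  have := congr1 (fun r : 'rV_2 => r 0 1) (config_row0 (pt 0 y) (pt 1 (y + 1)) (pt 2 y)).
  by rewrite !mxE.
by rewrite -{1}agents01 -(vecmxE (agents y)) norm2_ge_coord.
Qed.

Theorem theorem14 :
  exists (p n : nat) (L : nat -> 'M[R]_p) (Q : nat -> 'M[R]_n),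
    (forall k, interconnection (L k)) /\ (forall k, Qbar (Q k)) /\
    exists x : nat -> 'cV[R]_(p * n), is_solution L Q x /\ unbounded x.
Proof.
exists 3%N, 2%N, (fun k => (schedule k).1), (fun k => (schedule k).2).
split; [|split].
- by move=> k; rewrite /schedule; case: modn => [|[|[|?]]]; exact: interconnection_select.
- by move=> k; rewrite /schedule; case: modn => [|[|[|?]]];
    [exact: Qbar_Py | exact: Qbar_Px | exact: Qbar_Pd | exact: Qbar_Py].
exists (fun k => vecmx (trajectory k)); split=> [k | B]; first by rewrite sysmx_vecmx.
exists (Num.bound `|B| * 4)%N; rewrite trajectory_round.
apply: lt_le_trans (agents_height _); rewrite normr_nat.
exact: le_lt_trans (ler_norm B) (archi_boundP (normr_ge0 B)).
Qed.
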